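(* Let $n\ge3$ and $\ell\ge1$, and let $c$ be an SR state on $K_n^{(\ell)}$. Let $k_1,k_2,k_3\in\{1,\dots,n\}$ be distinct, and suppose there is an orientation $\mathcal{O}$ of the complete graph $K_n$ on $\{1,\dots,n\}$ with $c_i\ge\mathrm{in}^{\mathcal{O}}_i$ for all $i\in\{1,\dots,n\}$ such that $k_1\to k_2$, $k_2\to k_3$ and $k_1\to k_3$ in $\mathcal{O}$. Then there exists a finite sequence of grain additions and topplings on $K_n^{(\ell)}$ leading from $c^{\max}$ to $c$ in which every toppling of $k_1$, $k_2$ or $k_3$ is deterministic, and in which the last topplings of these three vertices occur in the order $k_3$, then $k_2$, then $k_1$ ($k_3$ possibly never toppling).
   Context: For $n\ge3,\ell\ge1$, $K_n^{(\ell)}$ is the multigraph on vertex set $\{0,1,\dots,n\}$ with one edge between each pair of distinct vertices of $\{1,\dots,n\}$ and $\ell$ parallel edges between each $k\in\{1,\dots,n\}$ and the sink $0$; so every non-sink vertex has degree $n-1+\ell$. A configuration is $c\in\mathbb{Z}_{\ge0}^n$, stable if $c_i<n-1+\ell$ for all $i$; $c^{\max}=(n-2+\ell,\dots,n-2+\ell)$. A toppling of a vertex $i$ with $c_i\ge n-1+\ell$ moves one grain from $i$ along each edge of some sub-multiset of the edges incident to $i$ to the other endpoint (grains reaching the sink disappear); it is deterministic if that sub-multiset consists of all incident edges. A sequence of grain additions and topplings is a finite sequence of operations, each either adding one grain at a vertex of $\{1,\dots,n\}$ or toppling a currently unstable vertex. In the SSM with parameter $p\in(0,1)$, an unstable vertex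 topples by sending, independently for each incident edge, one grain along it with probability $p$; the SSM Markov chain on stable configurations adds a grain at vertex $i$ with probability $\mu_i>0$ and stabilises, and SR states are its recurrent states (equivalently, stable configurations reachable from $c^{\max}$ by a sequence of grain additions and topplings). $\mathrm{in}^{\mathcal{O}}_i$ denotes the in-degree of $i$ in $\mathcal{O}$, and $x\to y$ means the edge $\{x,y\}$ is directed from $x$ to $y$. *)

From HB Require Import structures.
From mathcomp Require Import all_boot.
Set Implicit Arguments. Unset Strict Implicit. Unset Printing Implicit Defensive.

(* Non-sink vertices 1..n of K_n^(l) are represented by 'I_n (vertex k+1 <-> k);
   the sink 0 is implicit.  Every non-sink vertex has degree n - 1 + l. *)

Definition config (n : nat) := {ffun 'I_n -> nat}.

Definition deg (n l : nat) : nat := n - 1 + l.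

Definition stable (n l : nat) (c : config n) : bool :=
  [forall i, c i < deg n l].

Definition cmax (n l : nat) : config n := [ffun _ => n - 2 + l].

(* An operation: add one grain at i, or topple i sending one grain to each
   non-sink neighbour in A (i \notin A) and s grains (s <= l) to the sink,
   i.e. along a sub-multiset of the edges incident to i. *)
Inductive op (n : nat) :=
| Add of 'I_n
| Topple of 'I_n & {set 'I_n} & nat.

Definition step (n l : nat) (c : config n) (o : op n) : option (config n) :=
  match o with
  | Add i => Some [ffun j => c j + (j == i)]
  | Topple i A s =>
      if [&& deg n l <= c i, s <= l & i \notin A]
      then Some [ffun j => if j == i then c i - (#|A| + s) else c j + (j \in A)]
      else None
  end.

Definition run (n l : nat) (c : config n) (ops : seq (op n)) : option (config n) :=
  foldl (fun oc o => obind (fun c' => step l c' o) oc) (Some c) ops.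

Definition deterministic (n l : nat) (o : op n) : bool :=
  match o with
  | Topple i A s => (A == [set~ i]) && (s == l)
  | Add _ => true
  end.

Definition topples_vertex (n : nat) (o : op n) (k : 'I_n) : bool :=
  match o with Topple i _ _ => i == k | Add _ => false end.

Definition topple_at (n : nat) (ops : seq (op n)) (k : 'I_n) (t : nat) : bool :=
  topples_vertex (nth (Add k) ops t) k.

Definition last_topple (n : nat) (ops : seq (op n)) (k : 'I_n) (t : nat) : Prop :=
  topple_at ops k t /\ forall t', t < t' -> ~~ topple_at ops k t'.

(* SR states: stable configurations reachable from cmax by a sequence of
   grain additions and topplings (the characterization given in the context). *)
Definition SR (n l : nat) (c : config n) : Prop :=
  stable l c /\ exists ops, run l (cmax n l) ops = Some c.

(* orientations of the complete graph K_n: o x y means x -> y *)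
Definition is_orientation (n : nat) (o : rel 'I_n) : Prop :=
  (forall i, ~~ o i i) /\ (forall i j, i != j -> o i j = ~~ o j i).

Definition indeg (n : nat) (o : rel 'I_n) (i : 'I_n) : nat := #|[set j | o j i]|.

From HB Require Import structures.
From mathcomp Require Import all_boot zify.
Set Implicit Arguments. Unset Strict Implicit.

(* From c^max,
   fire k2, k3, k1, k3, k2, k1 deterministically, each time after adding just
   enough grains: because the triangle is transitively oriented this leaves k1,
   k2, k3 holding exactly their in-degrees 0, 1, 2 inside the triangle.  Then
   settle the remaining vertices one at a time: a vertex u is brought to exactly
   n - 1 + l grains and toppled onto the not-yet-settled vertices together with
   its out-neighbours, all l sink edges included.  Afterwards every vertex v
   holds indeg v grains, and c is reached by adding grains. *)

Definition topples_only (n : nat) (P : pred 'I_n) (ops : seq (op n)) : bool :=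
  all (fun q => if q is Topple i _ _ then P i else true) ops.

Section Topplings.

Variable n : nat.
Implicit Types (ops : seq (op n)) (P Q : pred 'I_n) (k : 'I_n).

Lemma topples_onlyW P Q ops :
  {subset P <= Q} -> topples_only P ops -> topples_only Q ops.
Proof. by move=> sPQ; apply: sub_all => -[//|i A s /sPQ]. Qed.

Lemma topples_only_cat P ops1 ops2 :
  topples_only P (ops1 ++ ops2) = topples_only P ops1 && topples_only P ops2.
Proof. exact: all_cat. Qed.

Lemma topples_only_nth P ops k t : topples_only P ops -> topple_at ops k t -> P k.
Proof.
rewrite /topple_at => onlyP; case: (ltnP t (size ops)) => [lt_t|le_t]; last first.
  by rewrite nth_default.
by move: (all_nthP (Add k) onlyP t lt_t); case: nth => // i A s Pi /eqP <-.
Qed.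

Lemma last_topple_cat ops1 ops2 q k :
  topples_vertex q k -> topples_only (predC1 k) ops2 ->
  last_topple (ops1 ++ q :: ops2) k (size ops1).
Proof.
move=> qk only2; split; first by rewrite /topple_at nth_cat ltnn subnn.
move=> t lt_t; apply/negP; rewrite /topple_at nth_cat ltnNge (ltnW lt_t) /=.
case def_t: (t - size ops1) => [|m]; first lia.
by move/(@topples_only_nth _ ops2 k m only2)=> /=; rewrite eqxx.
Qed.

Lemma topple_before ops m k t :
  topples_only (predC1 k) (drop m ops) -> topple_at ops k t -> t < m.
Proof.
move=> only_drop kt; rewrite ltnNge; apply/negP=> le_mt.
move: kt; rewrite /topple_at -(subnKC le_mt) -nth_drop.
by move/(topples_only_nth only_drop)=> /=; rewrite eqxx.
Qed.

Lemma last_topples_ordered ops (a b : nat) k1 k2 k3 A B s s' post :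
  k1 != k2 -> k1 != k3 -> k2 != k3 ->
  topples_only [predC [:: k1; k2; k3]] post ->
  let ops' := ops ++ nseq a (Add k2) ++ Topple k2 A s ::
                     nseq b (Add k1) ++ Topple k1 B s' :: post in
  exists t1 t2, last_topple ops' k1 t1 /\ last_topple ops' k2 t2 /\ t2 < t1 /\
    (forall t, topple_at ops' k3 t -> t < t2).
Proof.
move=> n12 n13 n23 only_post ops'.
have only_adds k (c : nat) P : topples_only P (nseq c (Add k)) by rewrite /topples_only all_nseq orbT.
have post_avoids k : k \in [:: k1; k2; k3] -> topples_only (predC1 k) post.
  by move=> kk; apply: topples_onlyW only_post => i; rewrite inE; apply: contraNneq => ->.
set X1 := ops ++ nseq a (Add k2) ++ Topple k2 A s :: nseq b (Add k1).
set X2 := ops ++ nseq a (Add k2).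
have ops'E1 : ops' = X1 ++ Topple k1 B s' :: post by rewrite /ops' /X1 -!catA.
have ops'E2 : ops' = X2 ++ Topple k2 A s :: nseq b (Add k1) ++ Topple k1 B s' :: post.
  by rewrite /ops' /X2 -catA.
exists (size X1), (size X2); split; last split; last split.
- rewrite ops'E1; apply: last_topple_cat; first by rewrite /= eqxx.
  by rewrite post_avoids // inE eqxx.
- rewrite ops'E2; apply: last_topple_cat; first by rewrite /= eqxx.
  rewrite topples_only_cat only_adds /= n12 post_avoids //.
  by rewrite !inE eqxx orbT.
- by rewrite /X1 catA size_cat /= addnS ltnS leq_addr.
move=> t; apply: topple_before.
rewrite ops'E2 drop_size_cat //= n23 topples_only_cat only_adds /= n13.
by rewrite post_avoids // !inE eqxx !orbT.
Qed.

End Topplings.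

Section Runs.

Variables n l : nat.
Implicit Types (d : config n) (u : 'I_n) (A : {set 'I_n}) (ops : seq (op n)).

Lemma run_cat d d' ops1 ops2 :
  run l d ops1 = Some d' -> run l d (ops1 ++ ops2) = run l d' ops2.
Proof. by rewrite /run foldl_cat => ->. Qed.

Lemma run_cons d d' q ops : step l d q = Some d' -> run l d (q :: ops) = run l d' ops.
Proof. exact: (@run_cat d d' [:: q]). Qed.

Lemma run_adds d u k :
  run l d (nseq k (Add u)) = Some [ffun j => d j + (j == u) * k].
Proof.
elim: k d => [|k IHk] d.
  by congr Some; apply/ffunP=> j; rewrite ffunE muln0 addn0.
rewrite (@run_cons _ [ffun j => d j + (j == u)]) // IHk; congr Some; apply/ffunP=> j.
by rewrite !ffunE; case: (j == u); lia.
Qed.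

Lemma run_shed d u k : 1 <= l -> k <= d u - deg n l ->
  run l d (nseq k (Topple u set0 1)) = Some [ffun j => if j == u then d u - k else d j].
Proof.
move=> l_gt0; elim: k d => [|k IHk] d le_k.
  by congr Some; apply/ffunP=> j; rewrite ffunE subn0; case: eqP => // ->.
rewrite (run_cons (d' := [ffun j => if j == u then d u - 1 else d j])); last first.
  rewrite /step l_gt0 in_set0 cards0 ifT; last lia.
  by congr Some; apply/ffunP=> j; rewrite !ffunE in_set0 addn0.
rewrite IHk ffunE eqxx; last lia.
by congr Some; apply/ffunP=> j; rewrite !ffunE; case: eqP; lia.
Qed.

Definition fire d u A s : seq (op n) :=
  nseq (deg n l - d u) (Add u) ++ [:: Topple u A s].

Lemma run_fire d u A s : s <= l -> u \notin A ->
  run l d (fire d u A s) =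
  Some [ffun j => if j == u then maxn (d u) (deg n l) - (#|A| + s) else d j + (j \in A)].
Proof.
move=> le_sl uA; rewrite (run_cat _ (run_adds _ _ _)) /run /= /step ffunE eqxx.
rewrite le_sl uA andbT ifT; last lia.
by congr Some; apply/ffunP=> j; rewrite !ffunE; case: eqP => _; lia.
Qed.

Lemma run_settle d u A s : 1 <= l -> s <= l -> u \notin A ->
  exists ops, run l d ops =
    Some [ffun j => if j == u then deg n l - (#|A| + s) else d j + (j \in A)] /\
    topples_only (pred1 u) ops.
Proof.
move=> l_gt0 le_sl uA.
have run_d' := run_shed (d := d) (u := u) l_gt0 (leqnn _).
set d' := (X in Some X) in run_d'.
exists (nseq (d u - deg n l) (Topple u set0 1) ++ fire d' u A s); split.
  rewrite (run_cat _ run_d') run_fire //; congr Some; apply/ffunP=> j.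
  by rewrite !ffunE eqxx; case: eqP => // _; lia.
by rewrite topples_only_cat /topples_only all_nseq /= !all_cat all_nseq /= !eqxx !orbT.
Qed.

Lemma run_fill (c : config n) (s : seq 'I_n) d :
  (forall j, d j <= c j) -> (forall j, j \notin s -> d j = c j) ->
  exists ops, run l d ops = Some c /\ topples_only pred0 ops.
Proof.
elim: s d => [|i s IHs] d le_dc eq_dc.
  by exists [::]; split=> //; congr Some; apply/ffunP=> j; rewrite eq_dc.
have run_d' := run_adds d i (c i - d i).
set d' := (X in Some X) in run_d'.
have [|j sj|ops [run_ops only_ops]] := IHs d'.
- move=> j; rewrite ffunE; have := le_dc j; case: eqP => [->|_]; lia.
- rewrite ffunE; case: eqP => [->|/eqP ji]; first by have := le_dc i; lia.
  by rewrite addn0 eq_dc // inE negb_or ji.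
exists (nseq (c i - d i) (Add i) ++ ops); split; first by rewrite (run_cat _ run_d').
by rewrite topples_only_cat only_ops /topples_only all_nseq orbT.
Qed.

Definition fired d u : config n :=
  [ffun j => if j == u then d u - deg n l else (d j).+1].

Lemma run_fire_det d u : run l d (fire d u [set~ u] l) = Some (fired d u).
Proof.
rewrite run_fire ?inE ?eqxx //; congr Some; apply/ffunP=> j.
by rewrite !ffunE cardsC1 card_ord !inE /deg; case: eqP => _; lia.
Qed.

Fixpoint fire_seq d (us : seq 'I_n) : seq (op n) :=
  if us is u :: us' then fire d u [set~ u] l ++ fire_seq (fired d u) us' else [::].

Lemma run_fire_seq d us : run l d (fire_seq d us) = Some (foldl fired d us).
Proof. by elim: us d => [//|u us IHus] d; rewrite /= (run_cat _ (run_fire_det _ _)). Qed.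

Lemma fire_seq_cat d us vs :
  fire_seq d (us ++ vs) = fire_seq d us ++ fire_seq (foldl fired d us) vs.
Proof. by elim: us d => [//|u us IHus] d; rewrite /= IHus catA. Qed.

Lemma fire_seq_deterministic d us : all (deterministic l) (fire_seq d us).
Proof.
elim: us d => [//|u us IHus] d.
by rewrite /= all_cat IHus /fire all_cat all_nseq /= !eqxx !orbT.
Qed.

Lemma fire_triangle k1 k2 k3 : k1 != k2 -> k1 != k3 -> k2 != k3 -> 3 <= deg n l ->
  let d := foldl fired (cmax n l) [:: k2; k3; k1; k3; k2; k1] in
  [/\ d k1 = 0, d k2 = 1 & d k3 = 2].
Proof.
move=> n12 n13 n23 deg_ge3 /=.
have n_gt1 : 1 < n.
  rewrite ltnNge; apply: contra n12 => n_le1; apply/eqP/ord_inj.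
  by have := ltn_ord k1; have := ltn_ord k2; lia.
have n21 : (k2 == k1) = false by rewrite eq_sym (negbTE n12).
have n31 : (k3 == k1) = false by rewrite eq_sym (negbTE n13).
have n32 : (k3 == k2) = false by rewrite eq_sym (negbTE n23).
rewrite !ffunE !eqxx (negbTE n12) (negbTE n13) (negbTE n23) n21 n31 n32.
by move: deg_ge3; rewrite /deg; split; lia.
Qed.

Section Orientation.

Variable o : rel 'I_n.
Hypothesis ho : is_orientation o.

Lemma card_count (s : seq 'I_n) (P : pred 'I_n) :
  uniq s -> #|[set w | (w \in s) && P w]| = count P s.
Proof.
move=> s_uniq; rewrite -size_filter -(card_uniqP (filter_uniq P s_uniq)).
by apply: eq_card => w; rewrite !inE mem_filter andbC.
Qed.

Lemma indeg_count v : indeg o v = count (o^~ v) (enum 'I_n).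
Proof.
rewrite -card_count ?enum_uniq //.
by apply: eq_card => w; rewrite !inE mem_enum.
Qed.

Lemma indeg_split (t : seq 'I_n) v : uniq t ->
  indeg o v = count (o^~ v) t + count (o^~ v) (filter (predC (mem t)) (enum 'I_n)).
Proof.
move=> t_uniq; rewrite indeg_count -(permP (permEl (perm_filterC (mem t) _))).
rewrite count_cat; congr (_ + _); apply/permP/uniq_perm => //.
  exact/filter_uniq/enum_uniq.
by move=> w; rewrite mem_filter mem_enum andbT.
Qed.

Lemma orientation_flip i j : o i j -> o j i = false.
Proof.
case: ho => irr asym oij; have ij : i != j by apply: contraTneq oij => ->.
by rewrite asym 1?eq_sym // oij.
Qed.

(* The targets of u and its in-neighbours cover [set~ u] and overlap exactly in
   the pending in-neighbours. *)
Lemma card_targets (r : seq 'I_n) u : uniq r -> u \notin r ->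
  #|[set w | (w \in r) || o u w]| + indeg o u = (n - 1) + count (o^~ u) r.
Proof.
case: ho => irr asym r_uniq ur.
rewrite /indeg -cardsUI -(card_count _ r_uniq); congr (_ + _).
  rewrite subn1 -[n in n.-1]card_ord -(cardsC1 u); apply: eq_card => w; rewrite !inE.
  case: (eqVneq w u) => [->|wu]; first by rewrite (negbTE ur) (negbTE (irr u)).
  by rewrite asym 1?eq_sym //; case: (o w u); rewrite ?orbT.
apply: eq_card => w; rewrite !inE.
case: (eqVneq w u) => [->|wu]; first by rewrite (negbTE (irr u)) !andbF.
by rewrite asym 1?eq_sym //; case: (o w u); rewrite ?orbF ?andbF.
Qed.

Lemma run_pass (r : seq 'I_n) d : 1 <= l -> uniq r ->
  (forall v, v \notin r -> d v + count (o^~ v) r = indeg o v) ->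
  exists ops, run l d ops = Some [ffun v => indeg o v] /\ topples_only (mem r) ops.
Proof.
case: (ho) => irr _ l_gt0.
elim: r d => [|u r IHr] d.
  move=> _ settled; exists [::]; split=> //.
  by congr Some; apply/ffunP=> v; rewrite ffunE -settled // addn0.
move=> /= /andP[ur r_uniq] pending.
set A := [set w | (w \in r) || o u w].
have uA : u \notin A by rewrite inE negb_or ur irr.
have [ops1 [run1 only1]] := run_settle d l_gt0 (leqnn l) uA.
set d' := [ffun j => _] in run1.
have [|ops2 [run2 only2]] := IHr d' r_uniq.
  move=> v vr; rewrite ffunE; case: (eqVneq v u) => [->|vu].
    have A_le : #|A| <= n - 1.
      rewrite subn1 -[n in n.-1]card_ord -(cardsC1 u); apply: subset_leq_card.
      by apply/subsetP=> w wA; rewrite !inE; apply: contraTneq wA => ->.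
    (* the two occurrences of #|A| differ by a reverse coercion that lia does not see through *)
    by move: A_le (card_targets r_uniq ur); rewrite -/A /deg; set a := #|A|; lia.
  have := pending v; rewrite inE negb_or vu vr inE (negbTE vr) /= => /(_ isT).
  lia.
exists (ops1 ++ ops2); split; first by rewrite (run_cat _ run1).
rewrite topples_only_cat; apply/andP; split.
  by apply: topples_onlyW only1 => w /eqP ->; rewrite inE eqxx.
by apply: topples_onlyW only2 => w wr; rewrite inE wr orbT.
Qed.

End Orientation.

End Runs.

Theorem lemma5p5 (n l : nat) (hn : 3 <= n) (hl : 1 <= l) (c : config n)
  (hc : SR l c) (k1 k2 k3 : 'I_n)
  (h12 : k1 != k2) (h13 : k1 != k3) (h23 : k2 != k3)
  (o : rel 'I_n) (ho : is_orientation o)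
  (hcin : forall i, indeg o i <= c i)
  (ho12 : o k1 k2) (ho23 : o k2 k3) (ho13 : o k1 k3) :
  exists ops : seq (op n),
    run l (cmax n l) ops = Some c /\
    all (fun op => [|| topples_vertex op k1, topples_vertex op k2
                      | topples_vertex op k3] ==> deterministic l op) ops /\
    exists t1 t2,
      last_topple ops k1 t1 /\ last_topple ops k2 t2 /\ t2 < t1 /\
      (forall t, topple_at ops k3 t -> t < t2).
Proof.
have deg_ge3 : 3 <= deg n l by rewrite /deg; lia.
set tri := [:: k1; k2; k3].
set rest := filter (predC (mem tri)) (enum 'I_n).
have [t1 t2 t3] := fire_triangle h12 h13 h23 deg_ge3.
set d := foldl _ _ _ in t1 t2 t3.
have tri_uniq : uniq tri by rewrite /= !inE negb_or h12 h13 h23.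
have settled v : v \notin rest -> d v + count (o^~ v) rest = indeg o v.
  rewrite (indeg_split _ _ tri_uniq) mem_filter mem_enum andbT negbK => tri_v.
  congr (_ + _); have [irr _] := ho; have : v \in tri := tri_v.
  rewrite !inE => /or3P[] /eqP-> /=; rewrite !(negbTE (irr _)) ?ho12 ?ho13 ?ho23 //.
  - by rewrite t1 (orientation_flip ho ho12) (orientation_flip ho ho13).
  - by rewrite t2 (orientation_flip ho ho23).
have [P [runP onlyP]] := run_pass ho hl (filter_uniq _ (enum_uniq _)) settled.
have [Q [runQ onlyQ]] : exists Q, run l [ffun v => indeg o v] Q = Some c /\ topples_only pred0 Q.
  by apply: (@run_fill n l c (enum 'I_n)) => j; rewrite ?ffunE ?mem_enum.
exists (fire_seq l (cmax n l) [:: k2; k3; k1; k3; k2; k1] ++ P ++ Q).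
split; first by rewrite (run_cat _ (run_fire_seq _ _ _)) (run_cat _ runP).
have post_only : topples_only [predC tri] (P ++ Q).
  rewrite topples_only_cat; apply/andP; split; last exact: topples_onlyW onlyQ.
  by apply: topples_onlyW onlyP => w; rewrite mem_filter => /andP[].
split.
  rewrite all_cat (sub_all _ (fire_seq_deterministic _ _ _)) => [|q ->]; last exact: implybT.
  apply: sub_all post_only => -[//|i A s] /=; rewrite !inE.
  by case/norP=> /negbTE-> /norP[/negbTE-> /negbTE->].
rewrite (fire_seq_cat _ _ [:: k2; k3; k1; k3] [:: k2; k1]) -catA.
set pre := fire_seq _ _ [:: k2; k3; k1; k3]; clearbody pre.
rewrite /= cats0 /fire -!catA.
exact: last_topples_ordered.
Qed.
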